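(* Let $r\ge2$ be an integer, let $f\in C_p(\mathbb{R})$ and let $c>0$. Then $f\in\mathcal{P}_c$ if and only if the following holds: for all $n\in\mathbb{N}_0$, $k\in\mathbb{Z}$, $y\in(0,1)$ and all $t\ge \frac{1}{2cr^n}$, $$q_f\Big(t,x;\tfrac{k+y}{r^n}\Big)\ge \min\Big\{q_f\Big(t,x;\tfrac{k}{r^n}\Big),\,q_f\Big(t,x;\tfrac{k+1}{r^n}\Big)\Big\}\quad\text{for all }x\in\mathbb{R}.$$
   Context: $C_p(\mathbb{R})$ denotes the set of all continuous functions $f:\mathbb{R}\to\mathbb{R}$ periodic with period $1$ with $f(0)=0$; $\mathbb{N}_0=\mathbb{N}\cup\{0\}$. For $f\in C_p(\mathbb{R})$, $q_f(t,x;z)=f(z)+\frac{1}{2t}(x-z)^2$ for $(t,x,z)\in(0,\infty)\times\mathbb{R}\times\mathbb{R}$. For $(n,k,y)\in\mathbb{N}_0\times\mathbb{Z}\times(0,1)$ let $\delta^+_{n,k}(y;f)=\dfrac{f(\frac{k+1}{r^n})-f(\frac{k+y}{r^n})}{\frac{1-y}{r^n}}$, $\delta^-_{n,k}(y;f)=\dfrac{f(\frac{k+y}{r^n})-f(\frac{k}{r^n})}{\frac{y}{r^n}}$. For $c>0$, $\mathcal{P}_c$ is the set of $f\in C_p(\mathbb{R})$ with $\delta^+_{n,k}(y;f)-\delta^-_{n,k}(y;f)\le -c$ for all $(n,k,y)\in\mathbb{N}_0\times\mathbb{Z}\times(0,1)$. *)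

From Stdlib Require Import Reals Lra Lia ZArith.
Open Scope R_scope.

Definition Cp (f : R -> R) : Prop :=
  continuity f /\ (forall x, f (x + 1) = f x) /\ f 0 = 0.

Definition q (f : R -> R) (t x z : R) : R := f z + (x - z) ^ 2 / (2 * t).

Definition pt (r : nat) (n : nat) (k : Z) (y : R) : R := (IZR k + y) / (INR r) ^ n.

Definition delta_plus (r : nat) (f : R -> R) (n : nat) (k : Z) (y : R) : R :=
  (f (pt r n k 1) - f (pt r n k y)) / ((1 - y) / (INR r) ^ n).

Definition delta_minus (r : nat) (f : R -> R) (n : nat) (k : Z) (y : R) : R :=
  (f (pt r n k y) - f (pt r n k 0)) / (y / (INR r) ^ n).

Definition Pc (r : nat) (c : R) (f : R -> R) : Prop :=
  Cp f /\
  forall (n : nat) (k : Z) (y : R), 0 < y < 1 ->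
    delta_plus r f n k y - delta_minus r f n k y <= - c.

(* Write a := k/r^n, b := (k+1)/r^n and z := (1-y) a + y b = (k+y)/r^n.  The
   convexity defect of q_f(t,x;.) along the chord is exact:
     (1-y) q(a) + y q(b) - q(z) = y (1-y) (b-a) (delta+ - delta- + (b-a)/(2t)),
   since the quadratic term contributes its variance y (1-y) (b-a)^2 / (2t).
   If delta+ - delta- <= -c and (b-a)/(2t) <= c the defect is nonpositive, so
   q(z) dominates a convex combination of q(a), q(b) and hence their minimum.
   Conversely, at the extremal time t = (b-a)/(2c) pick x with q(a) = q(b):
   then q(z) >= min = (1-y) q(a) + y q(b) forces delta+ - delta- <= -c. *)

From Stdlib Require Import Reals ZArith Lra Lia.
Open Scope R_scope.

Definition interp (a b y : R) : R := (1 - y) * a + y * b.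

Definition slope_gap (f : R -> R) (a b y : R) : R :=
  (f b - f (interp a b y)) / ((1 - y) * (b - a))
  - (f (interp a b y) - f a) / (y * (b - a)).

Definition balance_point (f : R -> R) (t a b : R) : R :=
  (a + b) / 2 + t * (f b - f a) / (b - a).

Lemma Rmin_le_interp (u v y : R) : 0 <= y <= 1 -> Rmin u v <= (1 - y) * u + y * v.
Proof.
  intros Hy. unfold Rmin; destruct (Rle_dec u v); nra.
Qed.

Lemma q_interp_defect (f : R -> R) (t x a b y : R) :
  a <> b -> 0 < y < 1 -> t <> 0 ->
  (1 - y) * q f t x a + y * q f t x b - q f t x (interp a b y)
  = y * (1 - y) * (b - a) * (slope_gap f a b y + (b - a) / (2 * t)).
Proof.
  intros Hab Hy Ht. unfold q, slope_gap.
  generalize (f a) (f b) (f (interp a b y)); intros fa fb fz.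
  unfold interp. field. repeat split; lra.
Qed.

Lemma q_balance_point (f : R -> R) (t a b : R) :
  a <> b -> t <> 0 ->
  q f t (balance_point f t a b) a = q f t (balance_point f t a b) b.
Proof.
  intros Hab Ht. unfold q, balance_point. field. split; lra.
Qed.

Section Chord.

Variables (f : R -> R) (a b y c : R).
Hypotheses (Hab : a < b) (Hy : 0 < y < 1) (Hc : 0 < c).

Lemma q_interp_ge_Rmin (t x : R) :
  slope_gap f a b y <= - c -> (b - a) / (2 * c) <= t ->
  q f t x (interp a b y) >= Rmin (q f t x a) (q f t x b).
Proof.
  intros Hgap Ht.
  assert (Ht0 : 0 < t).
  { apply Rlt_le_trans with (2 := Ht), Rdiv_lt_0_compat; lra. }
  assert (Hstep : (b - a) / (2 * t) <= c).
  { assert (2 * c * ((b - a) / (2 * c)) = b - a) by (field; lra).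
    assert (2 * t * ((b - a) / (2 * t)) = b - a) by (field; lra).
    nra. }
  assert (Hw : 0 < y * (1 - y) * (b - a)).
  { repeat apply Rmult_lt_0_compat; lra. }
  pose proof (q_interp_defect f t x a b y ltac:(lra) Hy ltac:(lra)) as Hdef.
  pose proof (Rmin_le_interp (q f t x a) (q f t x b) y ltac:(lra)).
  assert (y * (1 - y) * (b - a) * (slope_gap f a b y + (b - a) / (2 * t)) <= 0).
  { rewrite <- (Rmult_0_r (y * (1 - y) * (b - a))).
    apply Rmult_le_compat_l; lra. }
  lra.
Qed.

Lemma slope_gap_le_of_q_interp_ge_Rmin :
  let t := (b - a) / (2 * c) in
  let x := balance_point f t a b in
  q f t x (interp a b y) >= Rmin (q f t x a) (q f t x b) ->
  slope_gap f a b y <= - c.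
Proof.
  intros t x Hq.
  assert (Ht0 : 0 < t) by (apply Rdiv_lt_0_compat; lra).
  assert (Hstep : (b - a) / (2 * t) = c) by (unfold t; field; lra).
  assert (Heq : q f t x a = q f t x b) by (apply q_balance_point; lra).
  rewrite <- Heq, Rmin_left in Hq by lra.
  pose proof (q_interp_defect f t x a b y ltac:(lra) Hy ltac:(lra)) as Hdef.
  rewrite Hstep, <- Heq in Hdef.
  assert (Hw : 0 < y * (1 - y) * (b - a)).
  { repeat apply Rmult_lt_0_compat; lra. }
  destruct (Rle_dec (slope_gap f a b y) (- c)) as [|Hgt]; [assumption|].
  assert (0 < y * (1 - y) * (b - a) * (slope_gap f a b y + c))
    by (apply Rmult_lt_0_compat; lra).
  lra.
Qed.

End Chord.

Section Grid.

Variables (r n : nat) (k : Z).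
Hypothesis Hr : (2 <= r)%nat.

Lemma pow_INR_pos : 0 < INR r ^ n.
Proof.
  apply pow_lt, lt_0_INR. lia.
Qed.

Lemma pt_interp (y : R) : pt r n k y = interp (pt r n k 0) (pt r n k 1) y.
Proof.
  pose proof pow_INR_pos. unfold pt, interp. field. lra.
Qed.

Lemma pt_step : pt r n k 1 - pt r n k 0 = 1 / INR r ^ n.
Proof.
  pose proof pow_INR_pos. unfold pt. field. lra.
Qed.

Lemma pt_lt : pt r n k 0 < pt r n k 1.
Proof.
  pose proof pow_INR_pos. pose proof pt_step.
  assert (0 < 1 / INR r ^ n) by (apply Rdiv_lt_0_compat; lra). lra.
Qed.

Lemma delta_gap_slope_gap (f : R -> R) (y : R) : 0 < y < 1 ->
  delta_plus r f n k y - delta_minus r f n k y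
  = slope_gap f (pt r n k 0) (pt r n k 1) y.
Proof.
  intros Hy. pose proof pow_INR_pos.
  unfold delta_plus, delta_minus, slope_gap. rewrite <- !pt_interp, pt_step.
  field. repeat split; lra.
Qed.

Lemma time_bound_step (c : R) : 0 < c ->
  1 / (2 * c * INR r ^ n) = (pt r n k 1 - pt r n k 0) / (2 * c).
Proof.
  intros Hc. pose proof pow_INR_pos. rewrite pt_step. field. lra.
Qed.

End Grid.

Theorem theorem2p3 (r : nat) (f : R -> R) (c : R) :
  (2 <= r)%nat -> Cp f -> 0 < c ->
  (Pc r c f <->
   forall (n : nat) (k : Z) (y t : R),
     0 < y < 1 -> 1 / (2 * c * (INR r) ^ n) <= t ->
     forall x : R,
       q f t x (pt r n k y) >= Rmin (q f t x (pt r n k 0)) (q f t x (pt r n k 1))).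
Proof.
  intros Hr Hf Hc.
  pose proof (fun n k => pt_lt r n k Hr) as Hlt.
  split.
  - intros [_ HP] n k y t Hy Ht x.
    rewrite (pt_interp r n k Hr y).
    apply (q_interp_ge_Rmin f _ _ y c); auto.
    + rewrite <- delta_gap_slope_gap by assumption. auto.
    + rewrite <- (time_bound_step r n k Hr c Hc). exact Ht.
  - intros H. split; [exact Hf|]. intros n k y Hy.
    rewrite delta_gap_slope_gap by assumption.
    apply (slope_gap_le_of_q_interp_ge_Rmin f _ _ y c); auto.
    rewrite <- (pt_interp r n k Hr y).
    apply H; [exact Hy|]. rewrite (time_bound_step r n k Hr c Hc). apply Rle_refl.
Qed.
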